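(* Let $\mathcal{C}$ be a deflation-exact category and let $\mathcal{A}$ be an admissibly deflation-percolating subcategory of $\mathcal{C}$. Let $f,g$ be composable morphisms of $\mathcal{C}$. If two of the three morphisms $f$, $g$, $gf$ belong to $S_{\mathcal{A}}$, then so does the third.
   Context: A conflation category is an additive category together with a class of kernel-cokernel pairs $A\xrightarrow{f}B\xrightarrow{g}C$ ($f=\ker g$, $g=\operatorname{coker} f$), closed under isomorphisms, called conflations; the first morphism is an inflation, the second a deflation. A deflation-exact category is a conflation category satisfying: (R0) $1_0$ is a deflation; (R1) composites of deflations are deflations; (R2) the pullback of a deflation along any morphism exists and is a deflation. A non-empty full subcategory $\mathcal{A}$ is admissibly deflation-percolating if: (A1) for every conflation $A'\rightarrowtail A\twoheadrightarrow A''$, $A\in\mathcal{A}$ iff $A',A''\in\mathcal{A}$; (A2) every morphism $C\to A$ with $A\in\mathcal{A}$ factors as a deflation $C\twoheadrightarrow A'$ followed by an inflation $A'\rightarrowtail A$ with $A'\in\mathcal{A}$; (A3) if $a\colon C\rightarrowtail D$ is an inflation and $b\colon C\twoheadrightarrow A$ a deflation with $A\in\mathcal{A}$, the pushout of $a$ along $b$ exists and yields a deflation $D\twoheadrightarrow P$ and an inflation $A\rightarrowtail P$. An $\mathcal{A}^{-1}$-inflation is an inflation with cokernel in $\mathcal{A}$; an $\mathcal{A}^{-1}$-deflation is a deflation with kernel in $\mathcal{A}$. $S_{\mathcal{A}}$ (the weak isomorphisms) is the set of all finite composites of $\mathcal{A}^{-1}$-inflations and $\mathcal{A}^{-1}$-deflations.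 *)

From HB Require Import structures.
From mathcomp Require Import all_boot all_algebra.
Set Implicit Arguments. Unset Strict Implicit. Unset Printing Implicit Defensive.
Import GRing.Theory.
Local Open Scope ring_scope.

Record AddCat := {
  obj : Type;
  hom : obj -> obj -> zmodType;
  idm : forall X, hom X X;
  cmp : forall X Y Z, hom Y Z -> hom X Y -> hom X Z;
  compA : forall X Y Z W (h : hom Z W) (g : hom Y Z) (f : hom X Y),
      cmp h (cmp g f) = cmp (cmp h g) f;
  comp1m : forall X Y (f : hom X Y), cmp (idm Y) f = f;
  compm1 : forall X Y (f : hom X Y), cmp f (idm X) = f;
  compDl : forall X Y Z (g g' : hom Y Z) (f : hom X Y),
      cmp (g + g') f = cmp g f + cmp g' f;
  compDr : forall X Y Z (g : hom Y Z) (f f' : hom X Y),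
      cmp g (f + f') = cmp g f + cmp g f';
  zobj : obj;
  zobj_init : forall X (u v : hom zobj X), u = v;
  zobj_term : forall X (u v : hom X zobj), u = v;
  bp : obj -> obj -> obj;
  bp_i1 : forall A B, hom A (bp A B);
  bp_i2 : forall A B, hom B (bp A B);
  bp_p1 : forall A B, hom (bp A B) A;
  bp_p2 : forall A B, hom (bp A B) B;
  bp_p1i1 : forall A B, cmp (bp_p1 A B) (bp_i1 A B) = idm A;
  bp_p2i2 : forall A B, cmp (bp_p2 A B) (bp_i2 A B) = idm B;
  bp_sum : forall A B, cmp (bp_i1 A B) (bp_p1 A B) + cmp (bp_i2 A B) (bp_p2 A B)
                       = idm (bp A B)
}.

Arguments idm {a} X.
Arguments cmp {a X Y Z}.
Arguments zobj {a}.
Arguments hom a : clear implicits.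

Section Conflations.
Variable C : AddCat.

Definition is_iso (X Y : obj C) (f : hom C X Y) : Prop :=
  exists g : hom C Y X, cmp g f = idm X /\ cmp f g = idm Y.

Definition is_kernel (A B D : obj C) (f : hom C A B) (g : hom C B D) : Prop :=
  cmp g f = 0 /\
  forall X (h : hom C X B), cmp g h = 0 -> exists! u : hom C X A, cmp f u = h.

Definition is_cokernel (A B D : obj C) (f : hom C A B) (g : hom C B D) : Prop :=
  cmp g f = 0 /\
  forall X (h : hom C B X), cmp h f = 0 -> exists! u : hom C D X, cmp u g = h.

Definition confl_class := forall X Y Z : obj C, hom C X Y -> hom C Y Z -> Prop.

Definition conflation_category (confl : confl_class) : Prop :=
  (forall A B D (f : hom C A B) (g : hom C B D),
      confl _ _ _ f g -> is_kernel f g /\ is_cokernel f g) /\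
  (forall A B D A' B' D' (f : hom C A B) (g : hom C B D)
          (f' : hom C A' B') (g' : hom C B' D')
          (a : hom C A A') (b : hom C B B') (c : hom C D D'),
      confl _ _ _ f g -> is_iso a -> is_iso b -> is_iso c ->
      cmp f' a = cmp b f -> cmp g' b = cmp c g ->
      confl _ _ _ f' g').

Variable confl : confl_class.

Definition inflation (A B : obj C) (f : hom C A B) : Prop :=
  exists (D : obj C) (g : hom C B D), confl f g.

Definition deflation (B D : obj C) (g : hom C B D) : Prop :=
  exists (A : obj C) (f : hom C A B), confl f g.

Definition is_pullback (B D E P : obj C) (p : hom C B E) (h : hom C D E)
    (p' : hom C P D) (h' : hom C P B) : Prop :=
  cmp p h' = cmp h p' /\
  forall Q (x : hom C Q D) (y : hom C Q B), cmp h x = cmp p y ->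
    exists! u : hom C Q P, cmp p' u = x /\ cmp h' u = y.

Definition is_pushout (E D A P : obj C) (a : hom C E D) (b : hom C E A)
    (b' : hom C D P) (a' : hom C A P) : Prop :=
  cmp b' a = cmp a' b /\
  forall Q (x : hom C D Q) (y : hom C A Q), cmp x a = cmp y b ->
    exists! u : hom C P Q, cmp u b' = x /\ cmp u a' = y.

Definition deflation_exact : Prop :=
  conflation_category confl /\
  (* R0 *) deflation (idm (@zobj C)) /\
  (* R1 *) (forall X Y Z (f : hom C X Y) (g : hom C Y Z),
              deflation f -> deflation g -> deflation (cmp g f)) /\
  (* R2 *) (forall B D E (p : hom C B E) (h : hom C D E), deflation p ->
              exists (P : obj C) (p' : hom C P D) (h' : hom C P B),
                is_pullback p h p' h' /\ deflation p').

Variable Aset : obj C -> Prop.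

Definition adm_deflation_percolating : Prop :=
  (exists X, Aset X) /\
  (* A1 *) (forall A' A A'' (f : hom C A' A) (g : hom C A A''), confl f g ->
              (Aset A <-> Aset A' /\ Aset A'')) /\
  (* A2 *) (forall X A (h : hom C X A), Aset A ->
              exists (A' : obj C) (d : hom C X A') (i : hom C A' A),
                Aset A' /\ deflation d /\ inflation i /\ h = cmp i d) /\
  (* A3 *) (forall E D A (a : hom C E D) (b : hom C E A),
              inflation a -> deflation b -> Aset A ->
              exists (P : obj C) (b' : hom C D P) (a' : hom C A P),
                is_pushout a b b' a' /\ deflation b' /\ inflation a').

Definition A_inflation (X Y : obj C) (f : hom C X Y) : Prop :=
  exists (Z : obj C) (g : hom C Y Z), confl f g /\ Aset Z.

Definition A_deflation (Y Z : obj C) (g : hom C Y Z) : Prop :=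
  exists (X : obj C) (f : hom C X Y), confl f g /\ Aset X.

Inductive S_A : forall X Y : obj C, hom C X Y -> Prop :=
  | S_A_infl X Y (f : hom C X Y) : A_inflation f -> S_A f
  | S_A_defl X Y (f : hom C X Y) : A_deflation f -> S_A f
  | S_A_comp X Y Z (f : hom C X Y) (g : hom C Y Z) : S_A f -> S_A g -> S_A (cmp g f).

End Conflations.

From Pilot Require Import Defs.
From mathcomp Require Import ssreflect ssrfun ssrbool eqtype ssralg.
Set Implicit Arguments. Unset Strict Implicit. Unset Printing Implicit Defensive.
Import GRing.Theory.
Local Open Scope ring_scope.

(* Every morphism of [S_A] factors as an A^{-1}-deflation followed by an
   A^{-1}-inflation: both classes are closed under composition, and an
   A^{-1}-inflation followed by an A^{-1}-deflation can be rewritten in the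
   opposite order using the factorizations (A2) and the pushouts (A3).  By
   induction on [S_A], two-out-of-three then reduces to cancelling a single
   A^{-1}-inflation or A^{-1}-deflation on either side of such a factored
   morphism.  The four cancellations are built from pullbacks (R2) and pushouts
   (A3); the key step is that in a morphism of conflations which is the identity
   on the cokernels, the middle component is an A^{-1}-deflation as soon as the
   left one is. *)

Local Notation compA := Defs.compA.
Local Notation "g ° f" := (cmp g f) (at level 40, left associativity).
Local Notation i1 := (bp_i1 _ _).
Local Notation i2 := (bp_i2 _ _).
Local Notation p1 := (bp_p1 _ _).
Local Notation p2 := (bp_p2 _ _).

Section Preadditive.
Variable C : AddCat.
Implicit Types X Y Z T A B : obj C.

Lemma comp0m X Y Z (f : hom C X Y) : (0 : hom C Y Z) ° f = 0.
Proof. by apply: (addrI (0 ° f)); rewrite -compDl !addr0. Qed.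

Lemma compm0 X Y Z (g : hom C Y Z) : g ° (0 : hom C X Y) = 0.
Proof. by apply: (addrI (g ° 0)); rewrite -compDr !addr0. Qed.

Lemma compNl X Y Z (g : hom C Y Z) (f : hom C X Y) : (- g) ° f = - (g ° f).
Proof. by apply: (addrI (g ° f)); rewrite -compDl !subrr comp0m. Qed.

Lemma compNr X Y Z (g : hom C Y Z) (f : hom C X Y) : g ° (- f) = - (g ° f).
Proof. by apply: (addrI (g ° f)); rewrite -compDr !subrr compm0. Qed.

Lemma compBl X Y Z (g g' : hom C Y Z) (f : hom C X Y) : (g - g') ° f = g ° f - g' ° f.
Proof. by rewrite compDl compNl. Qed.

Lemma compBr X Y Z (g : hom C Y Z) (f f' : hom C X Y) : g ° (f - f') = g ° f - g ° f'.
Proof. by rewrite compDr compNr. Qed.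

Lemma comp_eqA X Y Z W (a : hom C Y Z) (b : hom C X Y) (c : hom C X Z) (f : hom C W X) :
  a ° b = c -> a ° (b ° f) = c ° f.
Proof. by move=> <-; rewrite compA. Qed.

Lemma bp_ext_to A B T (u v : hom C T (bp A B)) :
  p1 ° u = p1 ° v -> p2 ° u = p2 ° v -> u = v.
Proof. by move=> h1 h2; rewrite -(comp1m u) -(comp1m v) -bp_sum !compDl -!compA h1 h2. Qed.

Lemma bp_ext_from A B T (u v : hom C (bp A B) T) :
  u ° i1 = v ° i1 -> u ° i2 = v ° i2 -> u = v.
Proof. by move=> h1 h2; rewrite -(compm1 u) -(compm1 v) -bp_sum !compDr !compA h1 h2. Qed.

Lemma bp_p1i2 A B : bp_p1 A B ° bp_i2 A B = 0.
Proof.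
have E : p1 ° i2 = p1 ° ((i1 ° p1 + i2 ° p2) ° i2) :> hom C B A by rewrite bp_sum comp1m.
rewrite compDl -!compA compDr bp_p2i2 compm1 (comp_eqA _ (bp_p1i1 A B)) comp1m in E.
by apply/esym/(addrI (p1 ° i2)); rewrite addr0 -E.
Qed.

Lemma bp_p2i1 A B : bp_p2 A B ° bp_i1 A B = 0.
Proof.
have E : p2 ° i1 = p2 ° ((i1 ° p1 + i2 ° p2) ° i1) :> hom C A B by rewrite bp_sum comp1m.
rewrite compDl -!compA compDr bp_p1i1 compm1 (comp_eqA _ (bp_p2i2 A B)) comp1m in E.
by apply/esym/(addrI (p2 ° i1)); rewrite addr0 -E.
Qed.

Lemma bp_p1i1r A B T (f : hom C T A) : bp_p1 A B ° (bp_i1 A B ° f) = f.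
Proof. by rewrite compA bp_p1i1 comp1m. Qed.

Lemma bp_p2i2r A B T (f : hom C T B) : bp_p2 A B ° (bp_i2 A B ° f) = f.
Proof. by rewrite compA bp_p2i2 comp1m. Qed.

Lemma bp_p1i2r A B T (f : hom C T B) : bp_p1 A B ° (bp_i2 A B ° f) = 0.
Proof. by rewrite compA bp_p1i2 comp0m. Qed.

Lemma bp_p2i1r A B T (f : hom C T A) : bp_p2 A B ° (bp_i1 A B ° f) = 0.
Proof. by rewrite compA bp_p2i1 comp0m. Qed.

End Preadditive.

Ltac hom_simpl1 :=
  rewrite ?compDl ?compDr ?compNl ?compNr -?compA ?comp0m ?compm0 ?comp1m ?compm1
    ?bp_p1i1r ?bp_p2i2r ?bp_p1i2r ?bp_p2i1r ?bp_p1i1 ?bp_p2i2 ?bp_p1i2 ?bp_p2i1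
    ?addr0 ?add0r ?oppr0 ?subr0 ?sub0r.
Ltac hom_simpl := hom_simpl1; hom_simpl1; hom_simpl1.

Section Conflations.
Variable C : AddCat.
Variable confl : confl_class C.
Hypothesis HC : deflation_exact confl.
Local Notation defl := (deflation confl).
Local Notation infl := (inflation confl).
Implicit Types X Y Z T A B D E K P Q : obj C.

Definition mono X Y (f : hom C X Y) := forall T (u v : hom C T X), f ° u = f ° v -> u = v.
Definition epi X Y (f : hom C X Y) := forall T (u v : hom C Y T), u ° f = v ° f -> u = v.

Lemma mono_comp X Y Z (f : hom C X Y) (g : hom C Y Z) : mono f -> mono g -> mono (g ° f).
Proof. by move=> Hf Hg T u v; rewrite -!compA => /Hg /Hf. Qed.

Lemma epi_comp X Y Z (f : hom C X Y) (g : hom C Y Z) : epi f -> epi g -> epi (g ° f).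
Proof. by move=> Hf Hg T u v; rewrite !compA => /Hf /Hg. Qed.

Lemma mono_of_ker0 X Y (f : hom C X Y) :
  (forall T (x : hom C T X), f ° x = 0 -> x = 0) -> mono f.
Proof.
move=> H T u v Euv; apply/eqP; rewrite -subr_eq0; apply/eqP; apply: H.
by rewrite compBr Euv subrr.
Qed.

Lemma iso_id X : is_iso (idm X).
Proof. by exists (idm X); rewrite comp1m. Qed.

Lemma confl_ker_coker A B D (f : hom C A B) (g : hom C B D) :
  confl f g -> is_kernel f g /\ is_cokernel f g.
Proof. by case: HC => [[H _] _]; apply: H. Qed.

Lemma confl_iso A B D A' B' D' (f : hom C A B) (g : hom C B D)
    (f' : hom C A' B') (g' : hom C B' D') (a : hom C A A') (b : hom C B B') (c : hom C D D') :
  confl f g -> is_iso a -> is_iso b -> is_iso c ->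
  f' ° a = b ° f -> g' ° b = c ° g -> confl f' g'.
Proof. by case: HC => [[_ H] _]; apply: H. Qed.

Lemma defl_comp X Y Z (f : hom C X Y) (g : hom C Y Z) : defl f -> defl g -> defl (g ° f).
Proof. by case: HC => _ [_ [H _]]; apply: H. Qed.

Lemma defl_pullback B D E (p : hom C B E) (h : hom C D E) : defl p ->
  exists P (p' : hom C P D) (h' : hom C P B), is_pullback p h p' h' /\ defl p'.
Proof. by case: HC => _ [_ [_ H]]; apply: H. Qed.

Lemma confl_defl A B D (f : hom C A B) (g : hom C B D) : confl f g -> defl g.
Proof. by move=> H; exists A, f. Qed.

Lemma confl_infl A B D (f : hom C A B) (g : hom C B D) : confl f g -> infl f.
Proof. by move=> H; exists D, g. Qed.

Lemma confl_comp0 A B D (f : hom C A B) (g : hom C B D) : confl f g -> g ° f = 0.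
Proof. by case/confl_ker_coker => [[]]. Qed.

Lemma confl_ker_factor A B D T (f : hom C A B) (g : hom C B D) (h : hom C T B) :
  confl f g -> g ° h = 0 -> exists u, f ° u = h.
Proof. by case/confl_ker_coker => [[_ H] _] /H [u [Hu _]]; exists u. Qed.

Lemma confl_coker_factor A B D T (f : hom C A B) (g : hom C B D) (h : hom C B T) :
  confl f g -> h ° f = 0 -> exists u, u ° g = h.
Proof. by case/confl_ker_coker => [_ [_ H]] /H [u [Hu _]]; exists u. Qed.

Lemma confl_mono A B D (f : hom C A B) (g : hom C B D) : confl f g -> mono f.
Proof.
move=> Hfg T u v E; have [H0 H] := (confl_ker_coker Hfg).1.
have [w [_ Hw]] : exists! w, f ° w = f ° v by apply: H; rewrite compA H0 comp0m.
by rewrite -(Hw u) // (Hw v).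
Qed.

Lemma confl_epi A B D (f : hom C A B) (g : hom C B D) : confl f g -> epi g.
Proof.
move=> Hfg T u v E; have [H0 H] := (confl_ker_coker Hfg).2.
have [w [_ Hw]] : exists! w, w ° g = v ° g by apply: H; rewrite -compA H0 compm0.
by rewrite -(Hw u) // (Hw v).
Qed.

Lemma confl_by_ker K B D F (k : hom C K B) (p : hom C B D) (f : hom C F B) :
  confl k p -> p ° f = 0 ->
  (forall T (h : hom C T B), p ° h = 0 -> exists u, f ° u = h) -> mono f ->
  confl f p.
Proof.
move=> Hk Hf Hl Hm.
have [phi Hphi] := confl_ker_factor Hk Hf.
have [psi Hpsi] := Hl _ _ (confl_comp0 Hk).
have E1 : phi ° psi = idm K by apply: (confl_mono Hk); rewrite compA Hphi Hpsi compm1.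
have E2 : psi ° phi = idm F by apply: Hm; rewrite compA Hpsi Hphi compm1.
apply: (confl_iso (a := psi) (b := idm B) (c := idm D) Hk); try exact: iso_id.
- by exists phi.
- by rewrite Hpsi comp1m.
- by rewrite comp1m compm1.
Qed.

Lemma confl_by_coker A B D D' (f : hom C A B) (g : hom C B D) (g' : hom C B D') :
  confl f g -> g' ° f = 0 ->
  (forall T (h : hom C B T), h ° f = 0 -> exists u, u ° g' = h) -> epi g' ->
  confl f g'.
Proof.
move=> Hf Hg He Hep.
have [phi Hphi] := confl_coker_factor Hf Hg.
have [psi Hpsi] := He _ _ (confl_comp0 Hf).
have E1 : phi ° psi = idm D' by apply: Hep; rewrite -compA Hpsi Hphi comp1m.
have E2 : psi ° phi = idm D by apply: (confl_epi Hf); rewrite -compA Hphi Hpsi comp1m.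
apply: (confl_iso (a := idm A) (b := idm B) (c := phi) Hf); try exact: iso_id.
- by exists psi.
- by rewrite comp1m compm1.
- by rewrite compm1 Hphi.
Qed.

Lemma defl_comp_iso K B B' D (k : hom C K B) (p : hom C B D) (phi : hom C B' B) :
  confl k p -> is_iso phi -> exists k' : hom C K B', confl k' (p ° phi).
Proof.
move=> Hk [psi [h1 h2]]; exists (psi ° k).
apply: (confl_iso (a := idm K) (b := psi) (c := idm D) Hk); try exact: iso_id.
- by exists phi.
- by rewrite compm1.
- by rewrite comp1m -compA h2 compm1.
Qed.

Lemma iso_comp_defl K B D D' (k : hom C K B) (p : hom C B D) (phi : hom C D D') :
  confl k p -> is_iso phi -> confl k (phi ° p).
Proof.
move=> Hk Hphi.
apply: (confl_iso (a := idm K) (b := idm B) (c := phi) Hk) => //; try exact: iso_id.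
- by rewrite comp1m compm1.
- by rewrite compm1.
Qed.

Lemma infl_comp_iso K K' B D (k : hom C K B) (p : hom C B D) (phi : hom C K' K) :
  confl k p -> is_iso phi -> confl (k ° phi) p.
Proof.
move=> Hk [psi [h1 h2]].
apply: (confl_iso (a := psi) (b := idm B) (c := idm D) Hk); try exact: iso_id.
- by exists phi.
- by rewrite -compA h2 compm1 comp1m.
- by rewrite comp1m compm1.
Qed.

Lemma confl_coker_iso A B D D' (k : hom C A B) (d : hom C B D) (d' : hom C B D') :
  confl k d -> confl k d' -> exists t : hom C D D', is_iso t /\ t ° d = d'.
Proof.
move=> Hd Hd'.
have [t Ht] := confl_coker_factor Hd (confl_comp0 Hd').
have [t' Ht'] := confl_coker_factor Hd' (confl_comp0 Hd).
exists t; split=> //; exists t'; split.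
- by apply: (confl_epi Hd); rewrite -compA Ht Ht' comp1m.
- by apply: (confl_epi Hd'); rewrite -compA Ht' Ht comp1m.
Qed.

Lemma mono_defl_iso K B D (k : hom C K B) (d : hom C B D) : confl k d -> mono d -> is_iso d.
Proof.
move=> Hk Hm.
have Hk0 : k = 0 by apply: Hm; rewrite compm0 (confl_comp0 Hk).
have [t Ht] : exists t, t ° d = idm B by apply: (confl_coker_factor Hk); rewrite Hk0 compm0.
exists t; split=> //.
by apply: (confl_epi Hk); rewrite -compA Ht compm1 comp1m.
Qed.

Section Pullback.
Variables (B D E P : obj C) (p : hom C B E) (h : hom C D E) (p' : hom C P D) (h' : hom C P B).
Hypothesis Hpb : is_pullback p h p' h'.

Lemma pullback_comm : p ° h' = h ° p'.
Proof. by case: Hpb. Qed.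

Lemma pullback_lift Q (x : hom C Q D) (y : hom C Q B) :
  h ° x = p ° y -> exists u, p' ° u = x /\ h' ° u = y.
Proof. by case: Hpb => _ H /H [u [Hu _]]; exists u. Qed.

Lemma pullback_uniq Q (u v : hom C Q P) : p' ° u = p' ° v -> h' ° u = h' ° v -> u = v.
Proof.
case: Hpb => H0 H E1 E2.
have [w [_ Hw]] : exists! w, p' ° w = p' ° v /\ h' ° w = h' ° v.
  by apply: H; rewrite !compA H0.
by rewrite -(Hw u) ?E1 ?E2 // (Hw v).
Qed.

Lemma pullback_sym : is_pullback h p h' p'.
Proof.
split; first by rewrite pullback_comm.
move=> Q x y Exy; have [u [h1 h2]] := pullback_lift (esym Exy).
by exists u; split=> // v [v1 v2]; apply: pullback_uniq; rewrite ?h1 ?h2.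
Qed.

End Pullback.

Lemma mk_pullback B D E P (p : hom C B E) (h : hom C D E) (p' : hom C P D) (h' : hom C P B) :
  p ° h' = h ° p' ->
  (forall Q (x : hom C Q D) (y : hom C Q B), h ° x = p ° y ->
     exists u, p' ° u = x /\ h' ° u = y) ->
  (forall Q (u v : hom C Q P), p' ° u = p' ° v -> h' ° u = h' ° v -> u = v) ->
  is_pullback p h p' h'.
Proof.
move=> H0 Hl Hu; split=> // Q x y Exy; have [u [h1 h2]] := Hl _ _ _ Exy.
by exists u; split=> // v [v1 v2]; apply: Hu; rewrite ?h1 ?h2.
Qed.

Lemma pushout_lift E D A P (a : hom C E D) (b : hom C E A) (b' : hom C D P) (a' : hom C A P) :
  is_pushout a b b' a' ->
  forall Q (x : hom C D Q) (y : hom C A Q), x ° a = y ° b -> exists u, u ° b' = x /\ u ° a' = y.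
Proof. by case=> _ H Q x y /H [u [Hu _]]; exists u. Qed.

Lemma pullback_defl B D E P (p : hom C B E) (h : hom C D E) (p' : hom C P D) (h' : hom C P B)
  :
  is_pullback p h p' h' -> defl p -> defl p'.
Proof.
move=> Hpb Hp.
have [P2 [q [r [Hpb2 [K2 [k2 Hq]]]]]] := defl_pullback h Hp.
have [phi [f1 f2]] := pullback_lift Hpb2 (esym (pullback_comm Hpb)).
have [psi [g1 g2]] := pullback_lift Hpb (esym (pullback_comm Hpb2)).
have E1 : phi ° psi = idm P2.
  by apply: (pullback_uniq Hpb2); rewrite compA ?f1 ?f2 ?g1 ?g2 compm1.
have E2 : psi ° phi = idm P.
  by apply: (pullback_uniq Hpb); rewrite compA ?f1 ?f2 ?g1 ?g2 compm1.
have [k0 Hk0] := defl_comp_iso Hq (ex_intro _ psi (conj E2 E1)).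
by exists K2, k0; rewrite -f1.
Qed.

Lemma pullback_confl B D E P (p : hom C B E) (h : hom C D E) (p' : hom C P D) (h' : hom C P B)
    K (k : hom C K B) :
  is_pullback p h p' h' -> confl k p -> exists k' : hom C K P, h' ° k' = k /\ confl k' p'.
Proof.
move=> Hpb Hk; have [K0 [k0 Hk0]] := pullback_defl Hpb (confl_defl Hk).
have [k' [e1 e2]] : exists k' : hom C K P, p' ° k' = 0 /\ h' ° k' = k.
  by apply: (pullback_lift Hpb); rewrite compm0 (confl_comp0 Hk).
exists k'; split=> //; apply: (confl_by_ker Hk0 e1).
- move=> T z Hz.
  have : p ° (h' ° z) = 0 by rewrite compA (pullback_comm Hpb) -compA Hz compm0.
  case/(confl_ker_factor Hk) => u Hu; exists u; apply: (pullback_uniq Hpb).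
  + by rewrite compA e1 comp0m Hz.
  + by rewrite compA e2 Hu.
- by move=> T u v Euv; apply: (confl_mono Hk); rewrite -e2 -!compA Euv.
Qed.

Lemma pullback_confl_comp X Y Z K P (d' : hom C X Y) (k : hom C K Y) (d : hom C Y Z)
    (p' : hom C P K) (h' : hom C P X) :
  is_pullback d' k p' h' -> defl d' -> confl k d -> confl h' (d ° d').
Proof.
move=> Hpb Hd' Hkd; have [K0 [k0 Hk0]] := defl_comp Hd' (confl_defl Hkd).
apply: (confl_by_ker Hk0).
- by rewrite -compA (pullback_comm Hpb) compA (confl_comp0 Hkd) comp0m.
- move=> T z Hz; have [y Hy] := confl_ker_factor Hkd (etrans (compA _ _ _) Hz).
  by have [u [_ Hu]] := pullback_lift Hpb Hy; exists u.
- move=> T u v Euv; apply: (pullback_uniq Hpb) => //; apply: (confl_mono Hkd).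
  by rewrite !compA -(pullback_comm Hpb) -!compA Euv.
Qed.

Lemma confl_morph_pullback X Y Q N P (i : hom C X Y) (c : hom C Y Q) (eta : hom C N P)
    (rho : hom C P Q) (b' : hom C Y P) (s : hom C X N) :
  confl i c -> confl eta rho -> rho ° b' = c -> eta ° s = b' ° i -> is_pullback b' eta s i.
Proof.
move=> Hi Heta Hc Hs; apply: mk_pullback; first by rewrite Hs.
- move=> T x y Exy.
  have : c ° y = 0 by rewrite -Hc -compA -Exy compA (confl_comp0 Heta) comp0m.
  case/(confl_ker_factor Hi) => z Hz; exists z; split=> //.
  by apply: (confl_mono Heta); rewrite compA Hs -compA Hz Exy.
- by move=> T u v _; apply: (confl_mono Hi).
Qed.

Lemma defl_lift_cover A P Z T (a : hom C A P) (pi : hom C P Z) (z : hom C T Z) :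
  confl a pi -> exists T' (tau : hom C T' T) (z' : hom C T' P) (kt : hom C A T'),
    confl kt tau /\ pi ° z' = z ° tau /\ z' ° kt = a.
Proof.
move=> Ha; have [T' [tau [z' [Hpb _]]]] := defl_pullback z (confl_defl Ha).
have [kt [Ekt Hkt]] := pullback_confl Hpb Ha.
by exists T', tau, z', kt; rewrite (pullback_comm Hpb).
Qed.

Lemma confl_0_id X : confl (0 : hom C zobj X) (idm X).
Proof.
have Hdefl0 : defl (idm (@zobj C)) by case: HC => _ [].
have [P [q [r [Hpb [K [k Hk]]]]]] := defl_pullback (0 : hom C X zobj) Hdefl0.
have [u [qu _]] : exists u : hom C X P, q ° u = idm X /\ r ° u = 0.
  by apply: (pullback_lift Hpb); apply: zobj_term.
have uq : u ° q = idm P.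
  by apply: (pullback_uniq Hpb); [rewrite compA qu comp1m compm1 | apply: zobj_term].
have [k1] := defl_comp_iso Hk (ex_intro _ q (conj qu uq)); rewrite qu => Hk1.
apply: (confl_by_ker Hk1); first by rewrite comp1m.
- by move=> T h; rewrite comp1m => ->; exists 0; apply: compm0.
- by move=> T u0 v0 _; apply: zobj_term.
Qed.

Lemma confl_bp_i1p2 A B : confl (idm A) (0 : hom C A zobj) -> confl (bp_i1 A B) (bp_p2 A B).
Proof.
move=> Hk.
have Hpb : is_pullback (0 : hom C A zobj) (0 : hom C B zobj) p2 p1.
  apply: mk_pullback; first by rewrite !comp0m.
  - by move=> Q x y _; exists (i1 ° y + i2 ° x); split; hom_simpl.
  - by move=> Q u v e2 e1; apply: bp_ext_to.
have [k' [e1 e2]] := pullback_confl Hpb Hk.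
suff -> : bp_i1 A B = k' by [].
by apply: bp_ext_to; hom_simpl; rewrite ?e1 // (confl_comp0 e2).
Qed.

Lemma confl_bp_i2p1 A B : confl (idm B) (0 : hom C B zobj) -> confl (bp_i2 A B) (bp_p1 A B).
Proof.
move=> Hk.
have Hpb : is_pullback (0 : hom C B zobj) (0 : hom C A zobj) p1 p2.
  apply: mk_pullback; first by rewrite !comp0m.
  - by move=> Q x y _; exists (i1 ° x + i2 ° y); split; hom_simpl.
  - by move=> Q u v; apply: bp_ext_to.
have [k' [e1 e2]] := pullback_confl Hpb Hk.
suff -> : bp_i2 A B = k' by [].
by apply: bp_ext_to; hom_simpl; rewrite ?e1 // (confl_comp0 e2).
Qed.

Lemma pushout_coker E D A P Z (a : hom C E D) (d : hom C D Z) (b : hom C E A)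
    (b' : hom C D P) (a' : hom C A P) :
  confl a d -> is_pushout a b b' a' -> defl b' -> infl a' ->
  exists pi : hom C P Z, pi ° b' = d /\ confl a' pi.
Proof.
move=> Had Hpo [Kb [kb Hb]] [Za [ca Ha]]; have [Hpo0 _] := Hpo.
have [pi [pi1 pi2]] : exists pi : hom C P Z, pi ° b' = d /\ pi ° a' = 0.
  by apply: (pushout_lift Hpo); rewrite comp0m (confl_comp0 Had).
exists pi; split=> //; apply: (confl_by_coker Ha pi2).
- move=> T h Hh.
  have : (h ° b') ° a = 0 by rewrite -compA Hpo0 compA Hh comp0m.
  case/(confl_coker_factor Had) => z Hz; exists z.
  by apply: (confl_epi Hb); rewrite -compA pi1.
- by move=> T u v Euv; apply: (confl_epi Had); rewrite -pi1 !compA Euv.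
Qed.

Lemma pushout_ker K E D A P Z (k : hom C K E) (b : hom C E A) (a : hom C E D) (d : hom C D Z)
    (b' : hom C D P) (a' : hom C A P) :
  confl k b -> confl a d -> is_pushout a b b' a' -> defl b' -> infl a' -> confl (a ° k) b'.
Proof.
move=> Hkb Had Hpo Hb' Ha'; have [Hpo0 _] := Hpo.
have [pi [pi1 _]] := pushout_coker Had Hpo Hb' Ha'.
have [[Kb [kb Hb]] [Za [ca Ha]]] := (Hb', Ha').
apply: (confl_by_ker Hb).
- by rewrite compA Hpo0 -compA (confl_comp0 Hkb) compm0.
- move=> T z Hz.
  have : d ° z = 0 by rewrite -pi1 -compA Hz compm0.
  case/(confl_ker_factor Had) => y Hy.
  have : b ° y = 0 by apply: (confl_mono Ha); rewrite compm0 compA -Hpo0 -compA Hy.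
  by case/(confl_ker_factor Hkb) => x Hx; exists x; rewrite -compA Hx.
- exact: mono_comp (confl_mono Hkb) (confl_mono Had).
Qed.

Lemma split_defl_iso T0 Y K (t1 : hom C T0 Y) (s : hom C Y T0) (k : hom C K T0) :
  t1 ° s = idm Y -> confl k t1 ->
  exists tau : hom C T0 K, tau ° s = 0 /\ tau ° k = idm K /\ is_iso (s ° p1 + k ° p2).
Proof.
move=> Hs Hk.
have [tau Ht] : exists tau, k ° tau = idm T0 - s ° t1.
  by apply: (confl_ker_factor Hk); rewrite compBr compA Hs comp1m compm1 subrr.
have Hts : tau ° s = 0.
  by apply: (confl_mono Hk); rewrite compA Ht compm0 compBl comp1m -compA Hs compm1 subrr.
have Htk : tau ° k = idm K.
  apply: (confl_mono Hk); rewrite compA Ht compBl comp1m compm1 -compA (confl_comp0 Hk).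
  by rewrite compm0 subr0.
exists tau; do 2!split=> //; exists (i1 ° t1 + i2 ° tau); split.
- by apply: bp_ext_from; hom_simpl; rewrite ?Hs ?Hts ?Htk ?(confl_comp0 Hk); hom_simpl.
- by hom_simpl; rewrite Ht addrC subrK.
Qed.

Lemma defl_copair Y R M P (e : hom C Y R) (m : hom C M P) (pi : hom C P R) (g : hom C Y P) :
  defl e -> confl m pi -> pi ° g = e -> defl (g ° p1 + m ° p2).
Proof.
move=> He Hm Eg.
have [T0 [t1 [t2 [Hpb _]]]] := defl_pullback e (confl_defl Hm).
have [k0 [tk0 Hk0]] := pullback_confl Hpb Hm.
have [Kt [kt Ht2]] := pullback_defl (pullback_sym Hpb) He.
have [s [ts1 ts2]] : exists s : hom C Y T0, t1 ° s = idm Y /\ t2 ° s = g.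
  by apply: (pullback_lift Hpb); rewrite compm1 Eg.
have [_ [_ [_ Hiso]]] := split_defl_iso ts1 Hk0.
have [kG HG] := defl_comp_iso Ht2 Hiso.
by exists Kt, kG; move: HG; hom_simpl; rewrite (comp_eqA _ ts2) (comp_eqA _ tk0).
Qed.

Lemma defl_bp_id_sum Y W M (g : hom C W M) :
  defl g -> defl (i1 ° p1 + i2 ° (g ° p2) : hom C (bp Y W) (bp Y M)).
Proof.
move=> Hg; apply: (pullback_defl (h := bp_p2 Y M) (h' := bp_p2 Y W) _ Hg).
apply: mk_pullback; first by hom_simpl.
- move=> Q x y Exy; exists (i1 ° (p1 ° x) + i2 ° y); split; last by hom_simpl.
  by apply: bp_ext_to; hom_simpl; rewrite ?Exy.
- move=> Q u v E1 E2; apply: bp_ext_to => //.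
  by move: (f_equal (cmp p1) E1); hom_simpl.
Qed.

End Conflations.

Section Percolating.
Variable C : AddCat.
Variable confl : confl_class C.
Hypothesis HC : deflation_exact confl.
Variable Aset : obj C -> Prop.
Hypothesis HA : adm_deflation_percolating confl Aset.
Local Notation defl := (deflation confl).
Local Notation infl := (inflation confl).
Local Notation Adefl := (A_deflation confl Aset).
Local Notation Ainfl := (A_inflation confl Aset).
Local Notation SA := (S_A confl Aset).
Implicit Types X Y Z T A B D E K L M N P Q R W : obj C.

Lemma Aset_confl A' A A'' (f : hom C A' A) (g : hom C A A'') :
  confl f g -> (Aset A <-> Aset A' /\ Aset A'').
Proof. by case: HA => _ [H _]; apply: H. Qed.

Lemma Aset_ker A' A A'' (f : hom C A' A) (g : hom C A A'') : confl f g -> Aset A -> Aset A'.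
Proof. by move/Aset_confl => H /H []. Qed.

Lemma Aset_coker A' A A'' (f : hom C A' A) (g : hom C A A'') : confl f g -> Aset A -> Aset A''.
Proof. by move/Aset_confl => H /H []. Qed.

Lemma Aset_ext A' A A'' (f : hom C A' A) (g : hom C A A'') :
  confl f g -> Aset A' -> Aset A'' -> Aset A.
Proof. by move/Aset_confl => H HA' HA''; apply/H. Qed.

Lemma factor_into_Aset X A (h : hom C X A) : Aset A ->
  exists A' (d : hom C X A') (i : hom C A' A), Aset A' /\ defl d /\ infl i /\ h = i ° d.
Proof. by case: HA => _ [_ [H _]]; apply: H. Qed.

Lemma pushout_into_Aset E D A (a : hom C E D) (b : hom C E A) :
  infl a -> defl b -> Aset A ->
  exists P (b' : hom C D P) (a' : hom C A P), is_pushout a b b' a' /\ defl b' /\ infl a'.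
Proof. by case: HA => _ [_ [_ H]]; apply: H. Qed.

Lemma Aset_zobj : Aset zobj.
Proof. by case: HA => [[A0 H0] _]; apply: (Aset_ker (confl_0_id HC A0) H0). Qed.

(* Only [1_0] is a deflation by (R0); [X -> 0] becomes one by factoring it through [A] with (A2). *)
Lemma confl_id_0 X : confl (idm X) (0 : hom C X zobj).
Proof.
have [A' [d [i [_ [[K [k Hk]] [[Z [c Hi]] E]]]]]] := factor_into_Aset (0 : hom C X zobj) Aset_zobj.
have Hiso : is_iso i.
  exists 0; split; last exact: zobj_init.
  by apply: (confl_mono HC Hi); apply: zobj_term.
have H0 := iso_comp_defl HC Hk Hiso; rewrite -E in H0.
apply: (confl_by_ker HC H0); first exact: zobj_term.
- by move=> T h _; exists h; rewrite comp1m.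
- by move=> T u v; rewrite !comp1m.
Qed.

Lemma confl_split_i1p2 A B : confl (bp_i1 A B) (bp_p2 A B).
Proof. exact: confl_bp_i1p2 HC A B (confl_id_0 A). Qed.

Lemma confl_split_i2p1 A B : confl (bp_i2 A B) (bp_p1 A B).
Proof. exact: confl_bp_i2p1 HC A B (confl_id_0 B). Qed.

Lemma Adefl_id X : Adefl (idm X).
Proof. by exists zobj, 0; split; [apply: confl_0_id | apply: Aset_zobj]. Qed.

Lemma Ainfl_id X : Ainfl (idm X).
Proof. by exists zobj, 0; split; [apply: confl_id_0 | apply: Aset_zobj]. Qed.

Lemma S_A_factor X M Y (d : hom C X M) (i : hom C M Y) : Adefl d -> Ainfl i -> SA (i ° d).
Proof. by move=> Hd Hi; apply: S_A_comp; [apply: S_A_defl | apply: S_A_infl]. Qed.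

Lemma defl_of_epi_Aset B A (p : hom C B A) : epi p -> Aset A -> exists K (k : hom C K B), confl k p.
Proof.
move=> Hep HA0.
have [A' [d [i [_ [[K [k Hk]] [[Z [c Hi]] E]]]]]] := factor_into_Aset p HA0.
have Hie : epi i by move=> T u v Euv; apply: Hep; rewrite E !compA Euv.
have Hc : c = 0 by apply: Hie; rewrite comp0m (confl_comp0 HC Hi).
have [s Hs] : exists s, i ° s = idm A by apply: (confl_ker_factor HC Hi); rewrite Hc comp0m.
have Hiso : is_iso i.
  exists s; split=> //.
  by apply: (confl_mono HC Hi); rewrite compA Hs comp1m compm1.
by exists K, k; rewrite E; apply: iso_comp_defl.
Qed.

Lemma section_infl T0 Y K (t : hom C T0 Y) (s : hom C Y T0) (k : hom C K T0) :
  t ° s = idm Y -> confl k t -> exists tau : hom C T0 K, confl s tau.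
Proof.
move=> Hs Hk; have [tau [Hts [Htk Hiso]]] := split_defl_iso HC Hs Hk.
exists tau.
apply: (confl_iso HC (a := idm Y) (b := s ° p1 + k ° p2) (c := idm K) (confl_split_i1p2 Y K))
  => //; try exact: iso_id; hom_simpl => //.
by rewrite (comp_eqA _ Hts) (comp_eqA _ Htk); hom_simpl.
Qed.

Lemma confl_bp_twist W Y (w : hom C W Y) :
  confl (i2 - i1 ° w : hom C W (bp Y W)) (p1 + w ° p2).
Proof.
apply: (confl_iso HC (a := idm W) (b := idm (bp Y W) - i1 ° (w ° p2)) (c := idm Y)
  (confl_split_i2p1 Y W)); try exact: iso_id.
- exists (idm (bp Y W) + i1 ° (w ° p2)); split; hom_simpl; [exact: subrK | exact: addrK].
- by hom_simpl.
- by hom_simpl; rewrite subrK.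
Qed.

Lemma Ainfl_cancel_infl M Y Z (i : hom C Y Z) (m : hom C M Y) : infl i -> Ainfl (i ° m) -> Ainfl m.
Proof.
move=> [Q [c Hi]] [Q2 [c2 [Him HQ2]]].
have [R [e [j [HR [[W [w Hw]] [[Zj [n Hj]] E]]]]]] := factor_into_Aset (c2 ° i) HQ2.
exists R, e; split=> //; apply: (confl_by_ker HC Hw).
- apply: (confl_mono HC Hj); rewrite compm0 compA -E -compA.
  exact: (confl_comp0 HC Him).
- move=> T z Hz.
  have : c2 ° (i ° z) = 0 by rewrite compA E -compA Hz compm0.
  case/(confl_ker_factor HC Him) => u Hu.
  by exists u; apply: (confl_mono HC Hi); rewrite compA.
- by move=> T u v Euv; apply: (confl_mono HC Him); rewrite -!compA Euv.
Qed.

Lemma Adefl_comp X Y Z (d1 : hom C X Y) (d2 : hom C Y Z) : Adefl d1 -> Adefl d2 -> Adefl (d2 ° d1).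
Proof.
move=> [K1 [k1 [Hk1 HK1]]] [K2 [k2 [Hk2 HK2]]].
have [P [p' [h' [Hpb _]]]] := defl_pullback HC k2 (confl_defl Hk1).
have [k1' [_ Hk1']] := pullback_confl HC Hpb Hk1.
exists P, h'; split; first exact: (pullback_confl_comp HC Hpb (confl_defl Hk1) Hk2).
exact: Aset_ext Hk1' HK1 HK2.
Qed.

Lemma Ainfl_comp X Y Z (f1 : hom C X Y) (f2 : hom C Y Z) : Ainfl f1 -> Ainfl f2 -> Ainfl (f2 ° f1).
Proof.
move=> [Q1 [c1 [Hc1 HQ1]]] [Q2 [c2 [Hc2 HQ2]]].
have [P [b' [a' [Hpo [Hb' Ha']]]]] := pushout_into_Aset (confl_infl Hc2) (confl_defl Hc1) HQ1.
have [pi [_ Hpi]] := pushout_coker HC Hc2 Hpo Hb' Ha'.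
exists P, b'; split; first exact: (pushout_ker HC Hc1 Hc2 Hpo Hb' Ha').
exact: Aset_ext Hpi HQ1 HQ2.
Qed.

Lemma Adefl_of_ker_Ainfl X Y Z K1 K2 (d1 : hom C X Y) (e : hom C Y Z) (d2 : hom C X Z)
    (k1 : hom C K1 X) (k2 : hom C K2 X) (u : hom C K1 K2) :
  e ° d1 = d2 -> confl k1 d1 -> confl k2 d2 -> k2 ° u = k1 -> Ainfl u -> Adefl e.
Proof.
move=> Ed Hk1 Hk2 Eu [L [v [Huv HL]]].
have [P [b' [a' [Hpo [Hb' Ha']]]]] := pushout_into_Aset (confl_infl Hk2) (confl_defl Huv) HL.
have [pi [pi1 Hpi]] := pushout_coker HC Hk2 Hpo Hb' Ha'.
have Hk1b : confl k1 b' by rewrite -Eu; apply: (pushout_ker HC Huv Hk2 Hpo Hb' Ha').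
have [t [Hiso Ht]] := confl_coker_iso HC Hk1 Hk1b.
have -> : e = pi ° t by apply: (confl_epi HC Hk1); rewrite -compA Ht pi1.
by have [k Hk] := defl_comp_iso HC Hpi Hiso; exists L, k.
Qed.

Lemma Adefl_cancel_defl X Y Z (d1 : hom C X Y) (e : hom C Y Z) :
  defl d1 -> Adefl (e ° d1) -> Adefl e.
Proof.
move=> [K1 [k1 Hk1]] [K2 [k2 [Hk2 HK2]]].
have [u Hu] : exists u, k2 ° u = k1.
  by apply: (confl_ker_factor HC Hk2); rewrite -compA (confl_comp0 HC Hk1) compm0.
have Hum : mono u by move=> T a b Eab; apply: (confl_mono HC Hk1); rewrite -Hu -!compA Eab.
have [A' [d [j [_ [[Kd [kd Hd]] [[L [v Hj]] Eu]]]]]] := factor_into_Aset u HK2.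
have Hdm : mono d by move=> T a b Eab; apply: Hum; rewrite Eu -!compA Eab.
have Huv : confl u v by rewrite Eu; apply: (infl_comp_iso HC Hj (mono_defl_iso HC Hd Hdm)).
apply: (Adefl_of_ker_Ainfl erefl Hk1 Hk2 Hu).
by exists L, v; split; last exact: Aset_coker Hj HK2.
Qed.

(* The cokernel of [pi ° eta] is [P / (N + A')], that is, the cokernel [Q'] of [j]. *)
Lemma Ainfl_comp_kernel A' P Z N Q Q' (a' : hom C A' P) (pi : hom C P Z) (eta : hom C N P)
    (rho : hom C P Q) (j : hom C A' Q) (n : hom C Q Q') :
  confl a' pi -> confl eta rho -> confl j n -> rho ° a' = j -> Aset Q' -> Ainfl (pi ° eta).
Proof.
move=> Hapi Heta Hj Ej HQ'.
have [w Hw] : exists w : hom C Z Q', w ° pi = n ° rho.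
  by apply: (confl_coker_factor HC Hapi); rewrite -compA Ej (confl_comp0 HC Hj).
have Hwe : epi w.
  move=> T u v Euv; apply: (epi_comp (confl_epi HC Heta) (confl_epi HC Hj)).
  by rewrite -Hw !compA Euv.
have [Kw [kw Hkw]] := defl_of_epi_Aset Hwe HQ'.
exists Q', w; split=> //; apply: (confl_by_ker HC Hkw).
- by rewrite compA Hw -compA (confl_comp0 HC Heta) compm0.
- move=> T z Hz.
  have [T' [tau [z' [kt [Hkt [Hz' Ekt]]]]]] := defl_lift_cover HC z Hapi.
  have [a Ha] : exists a : hom C T' A', j ° a = rho ° z'.
    by apply: (confl_ker_factor HC Hj); rewrite compA -Hw -compA Hz' compA Hz comp0m.
  have [x' Hx'] : exists x' : hom C T' N, eta ° x' = z' - a' ° a.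
    by apply: (confl_ker_factor HC Heta); rewrite compBr compA Ej Ha subrr.
  have Hakt : a ° kt = idm A'.
    by apply: (confl_mono HC Hj); rewrite compA Ha -compA Ekt Ej compm1.
  have [x Hx] : exists x : hom C T N, x ° tau = x'.
    apply: (confl_coker_factor HC Hkt); apply: (confl_mono HC Heta).
    by rewrite compA Hx' compBl Ekt -compA Hakt compm1 subrr compm0.
  exists x; apply: (confl_epi HC Hkt).
  by rewrite -!compA Hx Hx' compBr compA (confl_comp0 HC Hapi) comp0m subr0.
- apply: mono_of_ker0 => T x Hx.
  have [a0 Ha0] : exists a0 : hom C T A', a' ° a0 = eta ° x.
    by apply: (confl_ker_factor HC Hapi); rewrite compA.
  have Ea0 : a0 = 0.
    apply: (confl_mono HC Hj); rewrite compm0 -Ej -compA Ha0 compA.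
    by rewrite (confl_comp0 HC Heta) comp0m.
  by apply: (confl_mono HC Heta); rewrite compm0 -Ha0 Ea0 compm0.
Qed.

Lemma Ainfl_Adefl_swap X Y Z (i : hom C X Y) (d : hom C Y Z) :
  Ainfl i -> Adefl d ->
  exists N (s : hom C X N) (i' : hom C N Z), Adefl s /\ Ainfl i' /\ d ° i = i' ° s.
Proof.
move=> [Q [c [Hi HQ]]] [K [k [Hk HK]]].
have [A' [e [j [HA' [[K' [kap He]] [[Q' [n Hj]] Ecj]]]]]] := factor_into_Aset (c ° k) HQ.
have [P [b' [a' [Hpo [Hb' Ha']]]]] := pushout_into_Aset (confl_infl Hk) (confl_defl He) HA'.
have [pi [pi1 Hapi]] := pushout_coker HC Hk Hpo Hb' Ha'.
have [rho [rho1 rho2]] : exists rho : hom C P Q, rho ° b' = c /\ rho ° a' = j.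
  exact: pushout_lift Hpo _ _ _ Ecj.
have [N [eta Heta]] : exists N (eta : hom C N P), confl eta rho.
  apply: defl_of_epi_Aset HQ => T u v Euv.
  by apply: (confl_epi HC Hi); rewrite -rho1 !compA Euv.
have [s Hs] : exists s : hom C X N, eta ° s = b' ° i.
  by apply: (confl_ker_factor HC Heta); rewrite compA rho1 (confl_comp0 HC Hi).
have Hpb := confl_morph_pullback HC Hi Heta rho1 Hs.
have [k' [_ Hk']] := pullback_confl HC Hpb (pushout_ker HC He Hk Hpo Hb' Ha').
exists N, s, (pi ° eta); split; first by exists K', k'; split; last exact: Aset_ker He HK.
split; first exact: Ainfl_comp_kernel Hapi Heta Hj rho2 (Aset_coker Hj HQ).
by rewrite -compA Hs compA pi1.
Qed.

Lemma confl_morph_ker W Y R M P N (w : hom C W Y) (e : hom C Y R) (m : hom C M P)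
    (pi : hom C P R) (g : hom C Y P) (gt : hom C W M) (psi : hom C N W) :
  confl w e -> confl m pi -> g ° w = m ° gt -> pi ° g = e -> confl psi gt ->
  forall T (z : hom C T Y), g ° z = 0 -> exists n, w ° (psi ° n) = z.
Proof.
move=> Hw Hm Eg Epi Hpsi T z Hz.
have : e ° z = 0 by rewrite -Epi -compA Hz compm0.
case/(confl_ker_factor HC Hw) => z1 Hz1.
have : gt ° z1 = 0 by apply: (confl_mono HC Hm); rewrite compm0 compA -Eg -compA Hz1.
by case/(confl_ker_factor HC Hpsi) => n Hn; exists n; rewrite Hn.
Qed.

(* [g ° d1] equals the deflation [(g, m) ° (1 (+) gt)]; its kernel [W (+) N] contains the
   kernel [W] of [d1] with cokernel [N], which lies in [A]. *)
Lemma Adefl_of_confl_morph W Y R M P (w : hom C W Y) (e : hom C Y R) (m : hom C M P)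
    (pi : hom C P R) (g : hom C Y P) (gt : hom C W M) :
  confl w e -> confl m pi -> g ° w = m ° gt -> pi ° g = e -> Adefl gt -> Adefl g.
Proof.
move=> Hw Hm Eg Epi [N [psi [Hpsi HN]]].
pose d1 : hom C (bp Y W) Y := p1 + w ° p2.
pose k1 : hom C W (bp Y W) := i2 - i1 ° w.
pose k2 := k1 ° bp_p1 W N + i1 ° (w ° (psi ° bp_p2 W N)).
have Hk1 : confl k1 d1 := confl_bp_twist w.
have Hgw0 : forall T (x : hom C T N), g ° (w ° (psi ° x)) = 0.
  by move=> T x; rewrite compA Eg -compA (comp_eqA _ (confl_comp0 HC Hpsi)) comp0m compm0.
have [KD [kD HD]] : defl (g ° d1).
  have -> : g ° d1 = (g ° p1 + m ° p2) ° (i1 ° p1 + i2 ° (gt ° p2)).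
    by rewrite /d1; hom_simpl; rewrite (comp_eqA _ Eg) -compA.
  apply: (defl_comp HC (defl_bp_id_sum HC Y (confl_defl Hpsi))).
  exact: (defl_copair HC (confl_defl Hw) Hm Epi).
have Hk2 : confl k2 (g ° d1).
  apply: (confl_by_ker HC HD).
  - by rewrite /k2 /k1 /d1; hom_simpl; rewrite Hgw0 subrr add0r.
  - move=> T z Hz.
    have [x Hx] := confl_morph_ker Hw Hm Eg Epi Hpsi (etrans (compA _ _ _) Hz).
    have : d1 ° (z - i1 ° (w ° (psi ° x))) = 0.
      by rewrite compBr -Hx /d1; hom_simpl; rewrite subrr.
    case/(confl_ker_factor HC Hk1) => y Hy.
    exists (bp_i1 W N ° y + bp_i2 W N ° x); rewrite /k2; hom_simpl.
    by move: Hy; rewrite /k1; hom_simpl => ->; apply: subrK.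
  - apply: mono_of_ker0 => T x Hx.
    have Hx1 : bp_p1 W N ° x = 0 by move: (f_equal (cmp p2) Hx); rewrite /k2 /k1; hom_simpl.
    have Hx2 : bp_p2 W N ° x = 0.
      apply: (mono_comp (confl_mono HC Hpsi) (confl_mono HC Hw)); rewrite compm0 -compA.
      by move: (f_equal (cmp p1) Hx); rewrite /k2 /k1; hom_simpl; rewrite Hx1; hom_simpl.
    by apply: bp_ext_to; rewrite compm0 ?Hx1 ?Hx2.
apply: (Adefl_of_ker_Ainfl erefl Hk1 Hk2 (u := bp_i1 W N)); first by rewrite /k2; hom_simpl.
by exists N, (bp_p2 W N); split; first exact: confl_split_i1p2.
Qed.

Lemma Adefl_cancel_Ainfl X W M (x : hom C X W) (g : hom C W M) :
  Ainfl x -> Adefl (g ° x) -> Adefl g.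
Proof.
move=> [L [l [Hxl HL]]] Hgx.
pose gl : hom C W (bp M L) := i1 ° g + i2 ° l.
have Hgl : Adefl gl.
  apply: (Adefl_of_confl_morph Hxl (confl_split_i1p2 M L) _ _ Hgx); rewrite /gl; hom_simpl=> //.
  by rewrite (confl_comp0 HC Hxl); hom_simpl.
have -> : g = p1 ° gl by rewrite /gl; hom_simpl.
by apply: (Adefl_comp Hgl); exists L, (bp_i2 M L); split; first exact: confl_split_i2p1.
Qed.

Lemma S_A_defl_infl X Y (f : hom C X Y) : SA f ->
  exists M (d : hom C X M) (i : hom C M Y), Adefl d /\ Ainfl i /\ f = i ° d.
Proof.
elim=> {X Y f} [X Y f Hf | X Y f Hf | X Y Z f g _ [M1 [d1 [j1 [Hd1 [Hj1 ->]]]]] _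
  [M2 [d2 [j2 [Hd2 [Hj2 ->]]]]]].
- by exists X, (idm X), f; rewrite compm1; split; first exact: Adefl_id.
- by exists Y, f, (idm Y); rewrite comp1m; do 2!split=> //; apply: Ainfl_id.
- have [N [s [i [Hs [Hi E]]]]] := Ainfl_Adefl_swap Hj1 Hd2.
  exists N, (s ° d1), (j2 ° i); split; first exact: Adefl_comp.
  split; first exact: Ainfl_comp.
  by rewrite -!compA (comp_eqA _ E) -compA.
Qed.

Lemma S_A_cancel_Ainfl_l X Y Z (i : hom C Y Z) (f : hom C X Y) : Ainfl i -> SA (i ° f) -> SA f.
Proof.
move=> [Q [c [Hi _]]] /S_A_defl_infl [M [d [i' [[K [k [Hk HK]]] [Hi' E]]]]].
have [m Hm] : exists m, i ° m = i'.
  apply: (confl_ker_factor HC Hi); apply: (confl_epi HC Hk).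
  by rewrite comp0m -compA -E compA (confl_comp0 HC Hi) comp0m.
have -> : f = m ° d by apply: (confl_mono HC Hi); rewrite E compA Hm.
apply: S_A_factor; first by exists K, k.
by apply: (Ainfl_cancel_infl (confl_infl Hi)); rewrite Hm.
Qed.

Lemma S_A_cancel_Adefl_l X Y Z (d : hom C Y Z) (f : hom C X Y) : Adefl d -> SA (d ° f) -> SA f.
Proof.
move=> [K [k [Hk HK]]] /S_A_defl_infl [M [d' [i [[K' [k' [Hk' HK']]] [[Q [c [Hc HQ]]] E]]]]].
have [P [q [j [Hpb _]]]] := defl_pullback HC i (confl_defl Hk).
have [kq [_ Hkq]] := pullback_confl HC Hpb Hk.
have Hj : confl j (c ° d) := pullback_confl_comp HC Hpb (confl_defl Hk) Hc.
have [f' [Hf'q Hf'j]] := pullback_lift Hpb (esym E).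
have [R [r1 [r2 [Hpb2 _]]]] := defl_pullback HC q (confl_defl Hk').
have [kr1 [_ Hr1]] := pullback_confl HC Hpb2 Hk'.
have [kr2 [_ Hr2]] := pullback_confl HC (pullback_sym Hpb2) Hkq.
have [sg [sg1 sg2]] : exists sg : hom C X R, r1 ° sg = f' /\ r2 ° sg = idm X.
  by apply: (pullback_lift Hpb2); rewrite compm1 Hf'q.
have [tau Hsg] := section_infl sg2 Hr2.
rewrite -Hf'j -sg1; apply: S_A_comp; last by apply: S_A_infl; exists Q, (c ° d).
by apply: S_A_comp; [apply: S_A_infl; exists K, tau | apply: S_A_defl; exists K', kr1].
Qed.

Lemma S_A_cancel_Adefl_r X Y Z (d : hom C X Y) (g : hom C Y Z) : Adefl d -> SA (g ° d) -> SA g.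
Proof.
move=> [K [k [Hk _]]] /S_A_defl_infl [M [d' [i [Hd' [[Q [c [Hc HQ]]] E]]]]].
have [e He] : exists e, e ° d = d'.
  apply: (confl_coker_factor HC Hk); apply: (confl_mono HC Hc).
  by rewrite compm0 compA -E -compA (confl_comp0 HC Hk) compm0.
have -> : g = i ° e by apply: (confl_epi HC Hk); rewrite E -compA He.
apply: S_A_factor; last by exists Q, c.
by apply: (Adefl_cancel_defl (confl_defl Hk)); rewrite He.
Qed.

Lemma S_A_cancel_Ainfl_r X Y Z (x : hom C X Y) (g : hom C Y Z) : Ainfl x -> SA (g ° x) -> SA g.
Proof.
move=> Hx /S_A_defl_infl [M [d [i [Hd [[Q [c [Hc HQ]]] E]]]]].
have [R [e [j [_ [[W [w Hw]] [[Q' [n Hj]] Ecg]]]]]] := factor_into_Aset (c ° g) HQ.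
have [P [pi [p [Hpb _]]]] := defl_pullback HC j (confl_defl Hc).
have [m [Hpm Hm]] := pullback_confl HC Hpb Hc.
have Hp : confl p (n ° c) := pullback_confl_comp HC Hpb (confl_defl Hc) Hj.
have [g' [Hg'pi Hg'p]] := pullback_lift Hpb (esym Ecg).
have [gt Hgt] : exists gt, m ° gt = g' ° w.
  by apply: (confl_ker_factor HC Hm); rewrite compA Hg'pi (confl_comp0 HC Hw).
have [x' Hx'] : exists x', w ° x' = x.
  apply: (confl_ker_factor HC Hw); apply: (confl_mono HC Hj).
  by rewrite compm0 compA -Ecg -compA E compA (confl_comp0 HC Hc) comp0m.
have Hgtx : gt ° x' = d.
  apply: (confl_mono HC Hc); rewrite -Hpm -!compA (comp_eqA _ Hgt) -compA Hx'.
  by rewrite (comp_eqA _ Hg'p) E (comp_eqA _ Hpm).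
have Hx'A : Ainfl x' by apply: (Ainfl_cancel_infl (confl_infl Hw)); rewrite Hx'.
have Hgt' : Adefl gt by apply: (Adefl_cancel_Ainfl Hx'A); rewrite Hgtx.
rewrite -Hg'p; apply: S_A_factor; last by exists Q', (n ° c); split; last exact: Aset_coker Hj HQ.
exact: Adefl_of_confl_morph Hw Hm (esym Hgt) Hg'pi Hgt'.
Qed.

Lemma S_A_cancel_l X Y Z (f : hom C X Y) (g : hom C Y Z) : SA g -> SA (g ° f) -> SA f.
Proof.
move=> Hg; elim: Hg X f => {Y Z g} [Y Z g Hg | Y Z g Hg | Y Y' Z g g' _ IH1 _ IH2] X f.
- exact: S_A_cancel_Ainfl_l.
- exact: S_A_cancel_Adefl_l.
- by move=> H; apply: IH1; apply: IH2; rewrite compA.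
Qed.

Lemma S_A_cancel_r X Y Z (f : hom C X Y) (g : hom C Y Z) : SA f -> SA (g ° f) -> SA g.
Proof.
move=> Hf; elim: Hf Z g => {X Y f} [X Y f Hf | X Y f Hf | X Y Y' f f' _ IH1 _ IH2] Z g.
- exact: S_A_cancel_Ainfl_r.
- exact: S_A_cancel_Adefl_r.
- by move=> H; apply: IH2; apply: IH1; rewrite -compA.
Qed.

End Percolating.

Theorem mainTheorem2 (C : AddCat) (confl : confl_class C)
  (HC : deflation_exact confl) (Aset : obj C -> Prop)
  (HA : adm_deflation_percolating confl Aset)
  (X Y Z : obj C) (f : hom C X Y) (g : hom C Y Z) :
  (S_A confl Aset f -> S_A confl Aset g -> S_A confl Aset (cmp g f)) /\
  (S_A confl Aset f -> S_A confl Aset (cmp g f) -> S_A confl Aset g) /\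
  (S_A confl Aset g -> S_A confl Aset (cmp g f) -> S_A confl Aset f).
Proof.
split; first exact: S_A_comp.
by split; [apply: (S_A_cancel_r HC HA) | apply: (S_A_cancel_l HC HA)].
Qed.
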